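(* Let $p,m,n\ge 1$, $M\ge 1$ be integers, let $N$ be the number of workers, and let $\mathbb{F}$ be a sufficiently large finite field. For private coded matrix multiplication (as described in the context) there exist linear coding schemes that achieve a recovery threshold of $2R(p,m,n)$. For private and secure distributed matrix multiplication there exist linear coding schemes that achieve a recovery threshold of $2R(p,m,n)+1$.
   Context: Private coded matrix multiplication: given $A\in\mathbb{F}^{s\times t}$ and a list $\boldsymbol{B}=(B^{(1)},\dots,B^{(M)})$ with $B^{(\ell)}\in\mathbb{F}^{s\times r}$, and a request index $D\in[M]$, the master wants $A^\intercal B^{(D)}$. Assume $p\mid s$, $m\mid t$, $n\mid r$; $A$ is partitioned into a $p$-by-$m$ grid of equal-size blocks and each $B^{(\ell)}$ into a $p$-by-$n$ grid of equal-size blocks. There are $N$ workers. The master sends worker $i$ a (possibly random) query $Q_i$ depending on $D$, together with a coded matrix $\tilde A_i\in\mathbb{F}^{\frac{s}{p}\times\frac{t}{m}}$ that is a linear combination of the blocks of $A$ (possibly padded with i.i.d. uniformly random key matrices of the same size). Worker $i$ encodes $\boldsymbol{B}$ into $\tilde B_i\in\mathbb{F}^{\frac{s}{p}\times\frac{r}{n}}$, a linear combination of the blocks of the $B^{(\ell)}$ with coefficients determined by $Q_i$, computes $\tilde A_i^\intercal\tilde B_i$ and returns it. The master decodes by linear combinations of received results, with coefficients that may depend on $D$ and the queries. A scheme achieves recovery threshold $K$ if the master can recover $A^\intercal B^{(D)}$ from the results of any subset of $K$ workers. Privacy requirement: $I(D;Q_i,\tilde A_i,\boldsymbol{B})=0$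 for every $i\in[N]$, where $A,\boldsymbol{B},D$ are uniformly random. Private and secure: in addition $I(\tilde A_i;A)=0$ for every $i\in[N]$ when $A$ is uniformly random. $R(p,m,n)$ denotes the bilinear complexity (tensor rank of the matrix multiplication tensor) of multiplying an $m$-by-$p$ matrix by a $p$-by-$n$ matrix. *)

From HB Require Import structures.
From Stdlib Require Import Rdefinitions Rpower.
From mathcomp Require Import all_boot all_order all_algebra all_field.
From mathcomp Require Import Rstruct.

Set Implicit Arguments.
Unset Strict Implicit.
Unset Printing Implicit Defensive.

Import Order.TTheory GRing.Theory Num.Theory.

Lemma blk_idx_lt (p a : nat) (j : 'I_p) (x : 'I_a) : (j * a + x < p * a)%N.
Proof.
have hj := ltn_ord j; have hx := ltn_ord x.
apply: (@leq_trans (j.+1 * a)); first by rewrite mulSn addnC ltn_add2r.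
by rewrite leq_mul2r hj orbT.
Qed.

Definition blk_idx (p a : nat) (j : 'I_p) (x : 'I_a) : 'I_(p * a) :=
  Ordinal (blk_idx_lt j x).

Definition block {F : Type} (p m a b : nat) (X : 'M[F]_(p * a, m * b))
  (j : 'I_p) (k : 'I_m) : 'M[F]_(a, b) :=
  \matrix_(x < a, y < b) X (blk_idx j x) (blk_idx k y).

Local Open Scope ring_scope.

(* Bilinear complexity R(p,m,n): tensor rank of the matrix multiplication   *)
(* tensor for (m x p) times (p x n) matrices, over the field F.             *)

(* <m,p,n> tensor: coefficient of X_{i j} Y_{j' l} in entry (k,l') of X*Y *)
Definition matmul_tensor (F : fieldType) (p m n : nat)
  (i : 'I_m) (j j' : 'I_p) (l : 'I_n) (k : 'I_m) (l' : 'I_n) : F :=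
  ((i == k) && (j == j') && (l == l'))%:R.

Definition has_rank_decomp (F : fieldType) (p m n r : nat) : Prop :=
  exists (u : 'I_r -> 'I_m -> 'I_p -> F) (v : 'I_r -> 'I_p -> 'I_n -> F)
         (w : 'I_r -> 'I_m -> 'I_n -> F),
    forall i j j' l k l',
      @matmul_tensor F p m n i j j' l k l' =
      \sum_(h < r) u h i j * v h j' l * w h k l'.

Definition is_bilinear_complexity (F : fieldType) (p m n R : nat) : Prop :=
  has_rank_decomp F p m n R /\
  forall r, has_rank_decomp F p m n r -> (R <= r)%N.

Definition uprob (Om : finType) (E : pred Om) : R :=
  (#|E|%:R / #|Om|%:R)%R.

Definition mutual_info (Om : finType) (X Y : finType)
  (f : Om -> X) (g : Om -> Y) : R :=
  \sum_(x : X) \sum_(y : Y)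
    let pxy := uprob [pred w | (f w == x) && (g w == y)] in
    let px := uprob [pred w | f w == x] in
    let py := uprob [pred w | g w == y] in
    if pxy == 0 then 0 else pxy * ln (pxy / (px * py)).

(*   F      : the field; block sizes a = s/p, b = t/m, c = r/n              *)
(*   D      : 'I_M, the requested index                                      *)
(*   Om     : the master's private randomness (uniform on a finite set)     *)
(*   Z      : T i.i.d. uniform key matrices of size a x b                    *)
(*   qry i D w        : query Q_i sent to worker i (values in type Qt)      *)
(*   gam Q l j k      : coefficient of block B^(l)_{jk} in B~_i, as a        *)
(*                      function of the query Q = Q_i only                   *)
(*   dec S D Qs i k l : decoding coefficient of the result of worker i ∈ S  *)
(*                      for the (k,l) block of A^T B^(D); depends on the     *)
(*                      responding set S, on D and on the queries Qs.        *)

Section Scheme.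

Variables (F : finFieldType) (p m n M N a b c : nat).
Variables (Om : finType) (T : nat) (Qt : finType).
Variable qry : 'I_N -> 'I_M -> Om -> Qt.
Variable alpha : 'I_N -> 'I_M -> Om -> 'I_p -> 'I_m -> F.
Variable beta : 'I_N -> 'I_M -> Om -> 'I_T -> F.
Variable gam : Qt -> 'I_M -> 'I_p -> 'I_n -> F.
Variable dec : {set 'I_N} -> 'I_M -> ('I_N -> Qt) -> 'I_N -> 'I_m -> 'I_n -> F.

Definition Amat := 'M[F]_(p * a, m * b).
Definition Bmat := 'M[F]_(p * a, n * c).
Definition Keys := {ffun 'I_T -> 'M[F]_(a, b)}.
Definition Blist := {ffun 'I_M -> Bmat}.

Definition codedA (i : 'I_N) (d : 'I_M) (w : Om) (Z : Keys) (A : Amat)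
  : 'M[F]_(a, b) :=
  \sum_(j < p) \sum_(k < m) alpha i d w j k *: block A j k
  + \sum_(z < T) beta i d w z *: Z z.

Definition codedB (q : Qt) (B : Blist) : 'M[F]_(a, c) :=
  \sum_(l < M) \sum_(j < p) \sum_(k < n) gam q l j k *: block (B l) j k.

Definition result (i : 'I_N) (d : 'I_M) (w : Om) (Z : Keys) (A : Amat)
  (B : Blist) : 'M[F]_(b, c) :=
  (codedA i d w Z A)^T *m codedB (qry i d w) B.

Definition achieves_threshold (K : nat) : Prop :=
  forall (S : {set 'I_N}), #|S| = K ->
  forall (d : 'I_M) (w : Om) (Z : Keys) (A : Amat) (B : Blist)
         (k : 'I_m) (l : 'I_n),
    block (A^T *m B d) k l =
    \sum_(i in S) dec S d (fun i' => qry i' d w) i k l *: result i d w Z A B.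

(* the sample space: D, master randomness, keys, A, B all independent and
   uniform *)
Definition Sample := ((('I_M * Om) * Keys) * Amat * Blist)%type.

Definition sD (s : Sample) : 'I_M := s.1.1.1.1.
Definition sW (s : Sample) : Om := s.1.1.1.2.
Definition sZ (s : Sample) : Keys := s.1.1.2.
Definition sA (s : Sample) : Amat := s.1.2.
Definition sB (s : Sample) : Blist := s.2.

Definition worker_view (i : 'I_N) (s : Sample) : Qt * 'M[F]_(a, b) * Blist :=
  (qry i (sD s) (sW s), codedA i (sD s) (sW s) (sZ s) (sA s), sB s).

Definition is_private : Prop :=
  forall i : 'I_N, mutual_info sD (worker_view i) = 0.

Definition is_secure : Prop :=
  forall i : 'I_N,
    mutual_info (fun s => codedA i (sD s) (sW s) (sZ s) (sA s)) sA = 0.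

End Scheme.

Definition exists_private_scheme (F : finFieldType) (p m n M N a b c K : nat)
  : Prop :=
  exists (Om : finType) (T : nat) (Qt : finType)
    (qry : 'I_N -> 'I_M -> Om -> Qt)
    (alpha : 'I_N -> 'I_M -> Om -> 'I_p -> 'I_m -> F)
    (beta : 'I_N -> 'I_M -> Om -> 'I_T -> F)
    (gam : Qt -> 'I_M -> 'I_p -> 'I_n -> F)
    (dec : {set 'I_N} -> 'I_M -> ('I_N -> Qt) -> 'I_N -> 'I_m -> 'I_n -> F),
    (0 < #|Om|)%N /\
    achieves_threshold a b c qry alpha beta gam dec K /\
    is_private n a b c qry alpha beta.

Definition exists_private_secure_scheme (F : finFieldType)
  (p m n M N a b c K : nat) : Prop :=
  exists (Om : finType) (T : nat) (Qt : finType)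
    (qry : 'I_N -> 'I_M -> Om -> Qt)
    (alpha : 'I_N -> 'I_M -> Om -> 'I_p -> 'I_m -> F)
    (beta : 'I_N -> 'I_M -> Om -> 'I_T -> F)
    (gam : Qt -> 'I_M -> 'I_p -> 'I_n -> F)
    (dec : {set 'I_N} -> 'I_M -> ('I_N -> Qt) -> 'I_N -> 'I_m -> 'I_n -> F),
    (0 < #|Om|)%N /\
    achieves_threshold a b c qry alpha beta gam dec K /\
    is_private n a b c qry alpha beta /\
    is_secure n a b c alpha beta.

(* The scheme is polynomial.  Fix R nodes [node h], N worker points [x i] off
   the nodes, and a rank-R decomposition (u, v, w) of the matrix multiplication
   tensor.  Worker i receives the value at [x i] of a matrix polynomial of degree
   < R whose value at [node h] is the linear form [\sum u h k j *: A_jk], plus T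
   keys times the polynomial [vanish] vanishing at the nodes; its query consists
   of the values at [x i] of polynomials equal to [v h] at [node h] on the blocks
   of B^(D) and to 0 on the other B^(l), plus random multiples of [vanish].  The
   answers are values of a matrix polynomial of degree < 2R + T, so any 2R + T of
   them determine it by Lagrange interpolation; its values at the nodes are the R
   bilinear products, which w combines into the blocks of A^T B^(D).  As [vanish]
   does not vanish at [x i], the random multiples make each query independent of
   D, and for T = 1 the key makes the coded matrix independent of A. *)

From Stdlib Require Import Rpower.
From mathcomp Require Import all_boot all_order all_algebra all_field.
From mathcomp Require Import Rstruct zify ring perm.

Set Implicit Arguments.
Unset Strict Implicit.
Unset Printing Implicit Defensive.

Import Order.TTheory GRing.Theory Num.Theory.
Local Open Scope ring_scope.

Section MutualInformation.

Variables (Om X Y : finType) (f : Om -> X) (g : Om -> Y).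

Lemma mutual_info_eq0_indep :
  (forall x y, #|[pred w | (f w == x) && (g w == y)]| * #|Om| =
               #|[pred w | f w == x]| * #|[pred w | g w == y]|)%N ->
  mutual_info f g = 0.
Proof.
move=> indep; rewrite /mutual_info big1 // => x _; rewrite big1 // => y _ /=.
case: ifP => // /negbT pxy_neq0.
have pxyE : uprob [pred w | (f w == x) && (g w == y)] =
            uprob [pred w | f w == x] * uprob [pred w | g w == y].
  rewrite /uprob mulrACA -invfM -!natrM -indep natrM.
  have [->|Om_neq0] := eqVneq #|Om| 0%N; first by rewrite !mulr0 !invr0 !mulr0.
  by rewrite natrM invfM mulrA mulfK // pnatr_eq0.
move: pxy_neq0; rewrite pxyE; set q := _ * _ => q_neq0.
by rewrite RdivE RmultE -/q mulfV // ln_1 mulr0.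
Qed.

(* The hypothesis makes the joint fibres [f = x, g = y] with a common [y]
   equinumerous, which is independence. *)
Lemma mutual_info_eq0_transitive :
  (forall x x', exists phi : Om -> Om, injective phi /\
      forall w, g (phi w) = g w /\ (f (phi w) == x') = (f w == x)) ->
  mutual_info f g = 0.
Proof.
move=> transp; apply: mutual_info_eq0_indep => x y.
pose c x y := #|[pred w | (f w == x) && (g w == y)]|.
have c_indep x1 x2 y1 : c x1 y1 = c x2 y1.
  have [phi [phi_inj phiP]] := transp x1 x2.
  pose A := [set w | (f w == x2) && (g w == y1)].
  transitivity #|phi @^-1: A|.
    by apply: eq_card => w; rewrite !inE /= (phiP w).1 (phiP w).2.
  by rewrite card_preimset //; apply: eq_card => w; rewrite !inE.
have card_partition (P : pred Om) (Z : finType) (h : Om -> Z) :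
    #|P| = (\sum_(z : Z) #|[pred w | P w && (h w == z)]|)%N.
  rewrite -sum1_card (partition_big h xpredT) //=.
  by apply: eq_bigr => z _; rewrite -sum1_card.
have card_fx x1 : #|[pred w | f w == x1]| = (\sum_y1 c x y1)%N.
  rewrite (card_partition _ _ g); apply: eq_bigr => y1 _.
  by rewrite (c_indep x x1); apply: eq_card.
have card_gy : #|[pred w | g w == y]| = (#|X| * c x y)%N.
  rewrite (card_partition _ _ f) -sum_nat_const; apply: eq_bigr => x1 _.
  by rewrite (c_indep x x1); apply: eq_card => w; rewrite !inE andbC.
have card_Om : #|Om| = (#|X| * \sum_y1 c x y1)%N.
  rewrite (card_partition _ _ f) -sum_nat_const; apply: eq_bigr => x1 _.
  by rewrite -(card_fx x1); apply: eq_card => w; rewrite !inE.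
rewrite card_gy card_Om (card_fx x) -/(c x y); lia.
Qed.

End MutualInformation.

Section Lagrange.

Variables (F : fieldType) (I : finType) (x : I -> F) (S : {set I}).
Hypothesis x_inj : {in S &, injective x}.

Definition lagrange_poly (i : I) : {poly F} :=
  (\prod_(j in S :\ i) (x i - x j))^-1 *: \prod_(j in S :\ i) ('X - (x j)%:P).

Lemma size_lagrange_poly i : i \in S -> (size (lagrange_poly i) <= #|S|)%N.
Proof.
move=> iS; apply: leq_trans (size_scale_leq _ _) _.
by rewrite -big_enum size_prod_XsubC -cardE (cardsD1 i S) iS.
Qed.

Lemma lagrange_poly_sample i k :
  i \in S -> k \in S -> (lagrange_poly i).[x k] = (k == i)%:R.
Proof.
move=> iS kS; rewrite /lagrange_poly hornerZ horner_prod.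
under [X in _ * X]eq_bigr do rewrite hornerXsubC.
have [->|ki] := eqVneq k i.
  rewrite mulVf //; apply/prodf_neq0 => j; rewrite !inE => /andP[ji jS].
  by rewrite subr_eq0; apply: contra ji => /eqP /x_inj ->.
rewrite [X in _ * X](bigD1 k) /=; last by rewrite !inE ki.
by rewrite subrr mul0r mulr0.
Qed.

Lemma lagrange_interpolation (P : {poly F}) : (size P <= #|S|)%N ->
  P = \sum_(i in S) P.[x i] *: lagrange_poly i.
Proof.
move=> sizeP; apply/eqP; rewrite -subr_eq0; apply/negPn/negP => nz.
have := max_poly_roots nz (rs := [seq x i | i <- enum S]).
have -> : all (root (P - \sum_(i in S) P.[x i] *: lagrange_poly i))
              [seq x i | i <- enum S].
  apply/allP => _ /mapP[k kS ->]; rewrite mem_enum in kS.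
  rewrite /root hornerD hornerN horner_sum (bigD1 k) //= hornerZ.
  rewrite lagrange_poly_sample // eqxx mulr1 big1 ?addr0 ?subrr // => j /andP[jS kj].
  by rewrite hornerZ lagrange_poly_sample // eq_sym (negbTE kj) mulr0.
rewrite map_inj_in_uniq ?enum_uniq; last by move=> ? ?; rewrite !mem_enum; apply: x_inj.
rewrite size_map -cardE => /(_ isT isT); apply/negP; rewrite -leqNgt.
apply: leq_trans (size_polyD _ _) _; rewrite size_polyN geq_max sizeP /=.
apply: leq_trans (size_sum _ _ _) _; apply/bigmax_leqP => i iS.
exact: leq_trans (size_scale_leq _ _) (size_lagrange_poly iS).
Qed.

Lemma lagrange_interpolation_mx r s (P : 'M[{poly F}]_(r, s)) t :
  P \is a mxOver (poly_of_size #|S|) ->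
  map_mx (horner_eval t) P =
  \sum_(i in S) (lagrange_poly i).[t] *: map_mx (horner_eval (x i)) P.
Proof.
move=> /mxOverP sizeP; apply/matrixP => y z; rewrite summxE mxE horner_evalE.
rewrite {1}(lagrange_interpolation (sizeP y z)) horner_sum.
by apply: eq_bigr => i _; rewrite !mxE hornerZ mulrC.
Qed.

End Lagrange.

Lemma blk_idx_inj (p a : nat) :
  injective (fun jx : 'I_p * 'I_a => blk_idx jx.1 jx.2).
Proof.
move=> [j x] [j' x'] /= /(congr1 val) /= jxE.
have a_gt0 : (0 < a)%N := leq_ltn_trans (leq0n x) (ltn_ord x).
have jE : j = j' :> nat.
  by move: (congr1 (divn^~ a) jxE); rewrite !divnMDl // !divn_small ?addn0 ?ltn_ord.
have xE : x = x' :> nat.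
  by move: (congr1 (modn^~ a) jxE); rewrite !modnMDl !modn_small ?ltn_ord.
by congr (_, _); apply: val_inj.
Qed.

Lemma big_blk_idx (V : nmodType) (p a : nat) (f : 'I_(p * a) -> V) :
  \sum_(r < p * a) f r = \sum_(j < p) \sum_(x < a) f (blk_idx j x).
Proof.
rewrite pair_big /= (reindex (fun jx : 'I_p * 'I_a => blk_idx jx.1 jx.2)) //=.
apply: onW_bij; apply: inj_card_bij; first exact: blk_idx_inj.
by rewrite card_prod !card_ord.
Qed.

Lemma block_trmx_mul (R : pzRingType) (p m n a b c : nat)
    (A : 'M[R]_(p * a, m * b)) (B : 'M[R]_(p * a, n * c)) k l :
  block (A^T *m B) k l = \sum_(j < p) (block A j k)^T *m block B j l.
Proof.
apply/matrixP => y z; rewrite !mxE summxE big_blk_idx.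
by apply: eq_bigr => j _; rewrite !mxE; apply: eq_bigr => x _; rewrite !mxE.
Qed.

Section BilinearAlgorithm.

Variables (F : fieldType) (p m n r : nat).
Variables (u : 'I_r -> 'I_m -> 'I_p -> F) (v : 'I_r -> 'I_p -> 'I_n -> F)
          (w : 'I_r -> 'I_m -> 'I_n -> F).
Hypothesis uvw_decomp : forall i j j' l k l',
  @matmul_tensor F p m n i j j' l k l' = \sum_(h < r) u h i j * v h j' l * w h k l'.

Lemma rank_decomp_trmx_mul (a b c : nat)
    (A : 'I_p -> 'I_m -> 'M[F]_(a, b)) (B : 'I_p -> 'I_n -> 'M[F]_(a, c)) k l :
  \sum_(h < r) w h k l *: ((\sum_j \sum_k' u h k' j *: A j k')^T *m
                            (\sum_j \sum_l' v h j l' *: B j l')) =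
  \sum_(j < p) (A j k)^T *m B j l.
Proof.
have expand h : w h k l *: ((\sum_j \sum_k' u h k' j *: A j k')^T *m
                            (\sum_j \sum_l' v h j l' *: B j l')) =
    \sum_j \sum_k' \sum_j' \sum_l'
      (u h k' j * v h j' l' * w h k l) *: ((A j k')^T *m B j' l').
  rewrite [X in X *m _]linear_sum mulmx_suml scaler_sumr; apply: eq_bigr => j _.
  rewrite [X in X *m _]linear_sum mulmx_suml scaler_sumr; apply: eq_bigr => k' _.
  rewrite mulmx_sumr scaler_sumr; apply: eq_bigr => j' _.
  rewrite mulmx_sumr scaler_sumr; apply: eq_bigr => l' _.
  rewrite linearZ /= [(_ *: A j k')^T]linearZ /= -scalemxAl !scalerA.
  by congr (_ *: _); ring.
rewrite (eq_bigr _ (fun h _ => expand h)) exchange_big /=.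
under eq_bigr do rewrite exchange_big.
under eq_bigr do under eq_bigr do rewrite exchange_big.
under eq_bigr do under eq_bigr do under eq_bigr do rewrite exchange_big.
under eq_bigr do under eq_bigr do under eq_bigr do under eq_bigr do
  rewrite -scaler_suml -uvw_decomp /matmul_tensor.
apply: eq_bigr => j _.
rewrite (bigD1 k) //= [X in _ + X]big1 ?addr0; last first.
  move=> k' /negbTE k'k; rewrite big1 // => j' _; rewrite big1 // => l' _.
  by rewrite k'k scale0r.
rewrite (bigD1 j) //= [X in _ + X]big1 ?addr0; last first.
  move=> j' /negbTE j'j; rewrite big1 // => l' _.
  by rewrite eq_sym j'j andbF scale0r.
rewrite (bigD1 l) //= [X in _ + X]big1 ?addr0; last first.
  by move=> l' /negbTE l'l; rewrite l'l andbF scale0r.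
by rewrite !eqxx scale1r.
Qed.

End BilinearAlgorithm.

Lemma has_rank_decomp_standard (F : fieldType) (p m n : nat) :
  has_rank_decomp F p m n #|{: 'I_m * 'I_p * 'I_n}|.
Proof.
pose E (h : 'I_#|{: 'I_m * 'I_p * 'I_n}|) := enum_val h.
exists (fun h i j => (((E h).1.1 == i) && ((E h).1.2 == j))%:R).
exists (fun h j l => (((E h).1.2 == j) && ((E h).2 == l))%:R).
exists (fun h k l => (((E h).1.1 == k) && ((E h).2 == l))%:R).
move=> i j j' l k l'.
rewrite /E -(big_enum_val (fun e : 'I_m * 'I_p * 'I_n =>
   ((e.1.1 == i) && (e.1.2 == j))%:R * ((e.1.2 == j') && (e.2 == l))%:R *
   ((e.1.1 == k) && (e.2 == l'))%:R : F)) /=.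
rewrite (bigD1 (i, j, l)) //= big1 ?addr0.
  rewrite /matmul_tensor !eqxx /= mul1r andbT -natrM mulnb.
  by case: (i == k); case: (j == j'); case: (l == l').
move=> [[i0 j0] l0] /= ne.
case ii0: (i0 == i); last by rewrite !mul0r.
case jj0: (j0 == j); last by rewrite !mul0r.
case ll0: (l0 == l); last by rewrite andbF mulr0 mul0r.
by move: ne; rewrite (eqP ii0) (eqP jj0) (eqP ll0) eqxx.
Qed.

Lemma bilinear_complexity_le (F : fieldType) (p m n R : nat) :
  is_bilinear_complexity F p m n R -> (R <= m * p * n)%N.
Proof.
move=> [_ minR]; have := minR _ (has_rank_decomp_standard F p m n).
by rewrite !card_prod !card_ord.
Qed.

Section PolyMatrices.

Variable F : fieldType.

Lemma poly_of_sizeE k (q : {poly F}) : (q \is a poly_of_size k) = (size q <= k)%N.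
Proof. by []. Qed.

Lemma map_mx_horner_scale_polyC r s (q : {poly F}) (X : 'M[F]_(r, s)) t :
  map_mx (horner_eval t) (q *: map_mx polyC X) = q.[t] *: X.
Proof. by apply/matrixP => y z; rewrite !mxE horner_evalE hornerM hornerC. Qed.

Lemma scale_polyC_mxOver r s k (q : {poly F}) (X : 'M[F]_(r, s)) :
  q \is a poly_of_size k -> q *: map_mx polyC X \is a mxOver (poly_of_size k).
Proof.
by move=> qk; apply/mxOverP => y z; rewrite !mxE mulrC mul_polyC rpredZ.
Qed.

Lemma trmx_mul_mxOver r s1 s2 k1 k2
    (P : 'M[{poly F}]_(r, s1)) (Q : 'M[{poly F}]_(r, s2)) :
  P \is a mxOver (poly_of_size k1) -> Q \is a mxOver (poly_of_size k2) ->
  P^T *m Q \is a mxOver (poly_of_size (k1 + k2).-1).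
Proof.
move=> /mxOverP Pk1 /mxOverP Qk2; apply/mxOverP => y z; rewrite mxE rpred_sum // => i _.
rewrite mxE; apply: leq_trans (size_polyMleq _ _) _.
by rewrite -!subn1 leq_sub2r // leq_add //; [exact: (Pk1 i y) | exact: (Qk2 i z)].
Qed.

End PolyMatrices.

Section PolynomialScheme.

Variables (F : finFieldType) (p m n M N R T a b c : nat).
Variables (u : 'I_R -> 'I_m -> 'I_p -> F) (v : 'I_R -> 'I_p -> 'I_n -> F)
          (w : 'I_R -> 'I_m -> 'I_n -> F).
Hypothesis uvw_decomp : forall i j j' l k l',
  @matmul_tensor F p m n i j j' l k l' = \sum_(h < R) u h i j * v h j' l * w h k l'.
Variables (x : 'I_N -> F) (node : 'I_R -> F).
Hypothesis x_inj : injective x.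
Hypothesis node_inj : injective node.
Hypothesis x_neq_node : forall i h, x i != node h.

Definition interp (g : 'I_R -> F) : {poly F} :=
  \sum_h g h *: lagrange_poly node [set: 'I_R] h.

Definition vanish : {poly F} := \prod_(h < R) ('X - (node h)%:P).

Lemma interp_node g h : (interp g).[node h] = g h.
Proof.
have node_inj_in : {in [set: 'I_R] &, injective node} by move=> ? ? _ _ /node_inj.
rewrite horner_sum (bigD1 h) //= hornerZ lagrange_poly_sample ?inE // eqxx mulr1.
rewrite big1 ?addr0 // => h' h'h.
by rewrite hornerZ lagrange_poly_sample ?inE // eq_sym (negbTE h'h) mulr0.
Qed.

Lemma size_interp g : interp g \is a poly_of_size R.
Proof.
rewrite rpred_sum // => h _; rewrite rpredZ // poly_of_sizeE.
by have := size_lagrange_poly node (in_setT h); rewrite cardsT card_ord.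
Qed.

Lemma vanish_node h : vanish.[node h] = 0.
Proof. by rewrite horner_prod (bigD1 h) //= hornerXsubC subrr mul0r. Qed.

Lemma vanish_x_neq0 i : vanish.[x i] != 0.
Proof.
rewrite horner_prod; apply/prodf_neq0 => h _.
by rewrite hornerXsubC subr_eq0 x_neq_node.
Qed.

Lemma size_vanish : size vanish = R.+1.
Proof. by rewrite size_prod_XsubC -[R in RHS]card_ord cardT enumT. Qed.

Definition Bidx := ('I_M * 'I_p * 'I_n)%type.
Definition Noise := {ffun Bidx -> F}.

Definition polyA (j : 'I_p) (k : 'I_m) : {poly F} := interp (fun h => u h k j).

(* For the requested [d], the [(l, j, k)] coordinate interpolates [v] on the
   nodes; the noise multiple of [vanish] hides [d] without changing the
   values at the nodes. *)
Definition polyB (d : 'I_M) (z : Noise) (t : Bidx) : {poly F} :=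
  (t.1.1 == d)%:R *: interp (fun h => v h t.1.2 t.2) + z t *: vanish.

Definition qry (i : 'I_N) (d : 'I_M) (z : Noise) : Noise :=
  [ffun t => (polyB d z t).[x i]].
Definition alpha (i : 'I_N) (d : 'I_M) (z : Noise) (j : 'I_p) (k : 'I_m) : F :=
  (polyA j k).[x i].
Definition beta (i : 'I_N) (d : 'I_M) (z : Noise) (t : 'I_T) : F := vanish.[x i].
Definition gam (q : Noise) (l : 'I_M) (j : 'I_p) (k : 'I_n) : F := q (l, j, k).
Definition dec (S : {set 'I_N}) (d : 'I_M) (Qs : 'I_N -> Noise) (i : 'I_N)
  (k : 'I_m) (l : 'I_n) : F := \sum_h w h k l * (lagrange_poly x S i).[node h].

Definition encA (A : Amat F p m a b) (Z : Keys F a b T) : 'M[{poly F}]_(a, b) :=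
  \sum_j \sum_k polyA j k *: map_mx polyC (block A j k)
  + \sum_t vanish *: map_mx polyC (Z t).

Definition encB (d : 'I_M) (z : Noise) (B : Blist F p n M a c) :
    'M[{poly F}]_(a, c) :=
  \sum_l \sum_j \sum_k polyB d z (l, j, k) *: map_mx polyC (block (B l) j k).

Lemma encA_eval A Z t0 : map_mx (horner_eval t0) (encA A Z) =
  \sum_j \sum_k (polyA j k).[t0] *: block A j k + \sum_t vanish.[t0] *: Z t.
Proof.
rewrite map_mxD !map_mx_sum; congr (_ + _).
  by apply: eq_bigr => j _; rewrite map_mx_sum; apply: eq_bigr => k _;
     rewrite map_mx_horner_scale_polyC.
by apply: eq_bigr => t _; rewrite map_mx_horner_scale_polyC.
Qed.

Lemma encB_eval d z B t0 : map_mx (horner_eval t0) (encB d z B) =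
  \sum_l \sum_j \sum_k (polyB d z (l, j, k)).[t0] *: block (B l) j k.
Proof.
rewrite map_mx_sum; apply: eq_bigr => l _; rewrite map_mx_sum.
apply: eq_bigr => j _; rewrite map_mx_sum.
by apply: eq_bigr => k _; rewrite map_mx_horner_scale_polyC.
Qed.

Lemma result_eval i d z Z A B :
  result qry alpha beta gam i d z Z A B =
  map_mx (horner_eval (x i)) ((encA A Z)^T *m encB d z B).
Proof.
rewrite map_mxM -map_trmx encA_eval encB_eval /result /codedA /codedB.
congr (_^T *m _); apply: eq_bigr => l _; apply: eq_bigr => j _.
by apply: eq_bigr => k _; rewrite /gam ffunE.
Qed.

Lemma encA_node A Z h : map_mx (horner_eval (node h)) (encA A Z) =
  \sum_j \sum_k u h k j *: block A j k.
Proof.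
rewrite encA_eval [X in _ + X]big1 ?addr0 => [|t _]; last by rewrite vanish_node scale0r.
by apply: eq_bigr => j _; apply: eq_bigr => k _; rewrite interp_node.
Qed.

Lemma encB_node d z B h : map_mx (horner_eval (node h)) (encB d z B) =
  \sum_j \sum_l v h j l *: block (B d) j l.
Proof.
rewrite encB_eval (bigD1 d) //= [X in _ + X]big1 ?addr0 => [|l ld].
  apply: eq_bigr => j _; apply: eq_bigr => k _.
  by rewrite /polyB /= hornerD !hornerZ interp_node vanish_node eqxx mulr0 addr0 mul1r.
rewrite big1 // => j _; rewrite big1 // => k _.
by rewrite /polyB /= hornerD !hornerZ vanish_node (negbTE ld) mulr0 mul0r addr0 scale0r.
Qed.

Lemma size_encA A Z : encA A Z \is a mxOver (poly_of_size (R + T)).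
Proof.
apply/mxOverP => y z; rewrite mxE !summxE rpredD ?rpred_sum // => [j _|t _].
  rewrite summxE rpred_sum // => k _; apply: (mxOverP (scale_polyC_mxOver _ _)).
  have := size_interp (fun h => u h k j); rewrite !poly_of_sizeE => /leq_trans.
  by apply; apply: leq_addr.
apply: (mxOverP (scale_polyC_mxOver _ _)).
by rewrite poly_of_sizeE size_vanish; have := ltn_ord t; lia.
Qed.

Lemma size_encB d z B : encB d z B \is a mxOver (poly_of_size R.+1).
Proof.
apply/mxOverP => y y'; rewrite summxE rpred_sum // => l _.
rewrite summxE rpred_sum // => j _; rewrite summxE rpred_sum // => k _.
apply: (mxOverP (scale_polyC_mxOver _ _)).
rewrite rpredD // rpredZ //; last by rewrite poly_of_sizeE size_vanish.
by have := size_interp (fun h => v h j k); rewrite !poly_of_sizeE => /leq_trans; apply.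
Qed.

Lemma scheme_threshold : achieves_threshold a b c qry alpha beta gam dec (2 * R + T)%N.
Proof.
move=> S cardS d z Z A B k l.
set P := (encA A Z)^T *m encB d z B.
have P_size : P \is a mxOver (poly_of_size #|S|).
  by rewrite cardS; have := trmx_mul_mxOver (size_encA A Z) (size_encB d z B);
     rewrite addnS /= addnC mul2n -addnn addnA.
have x_inj_in : {in S &, injective x} by move=> ? ? _ _ /x_inj.
have P_node h : (\sum_j \sum_k' u h k' j *: block A j k')^T *m
                (\sum_j \sum_l' v h j l' *: block (B d) j l') =
                map_mx (horner_eval (node h)) P.
  by rewrite map_mxM -map_trmx encA_node encB_node.
rewrite block_trmx_mul -(rank_decomp_trmx_mul uvw_decomp).
under eq_bigr do rewrite P_node (lagrange_interpolation_mx x_inj_in _ P_size) scaler_sumr.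
rewrite exchange_big /=; apply: eq_bigr => i _.
by rewrite result_eval -/P /dec scaler_suml; apply: eq_bigr => h _; rewrite scalerA.
Qed.

Lemma qry_eval i d z t : qry i d z t =
  (t.1.1 == d)%:R * (interp (fun h => v h t.1.2 t.2)).[x i] + z t * vanish.[x i].
Proof. by rewrite ffunE hornerD !hornerZ. Qed.

(* Replacing the request [d] by its image under the transposition of [d1] and
   [d2] leaves the query unchanged once the noise is shifted accordingly. *)
Lemma scheme_private : is_private n a b c qry alpha beta.
Proof.
move=> i; apply: mutual_info_eq0_transitive => d1 d2.
pose g (t : Bidx) := (interp (fun h => v h t.1.2 t.2)).[x i].
pose shift d (z : Noise) : Noise := [ffun t => z t + vanish.[x i]^-1 *
  (((t.1.1 == d)%:R - (t.1.1 == tperm d1 d2 d)%:R) * g t)].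
exists (fun s => (tperm d1 d2 (sD s), shift (sD s) (sW s), sZ s, sA s, sB s)).
split.
  move=> [[[[d z] Z] A] B] [[[[d' z'] Z'] A'] B'].
  rewrite /sD /sW /sZ /sA /sB /= => -[/perm_inj dd' zz' -> -> ->].
  subst d'; congr (_, _, _, _, _); apply/ffunP => t.
  by move/ffunP: zz' => /(_ t); rewrite !ffunE => /addIr.
move=> [[[[d z] Z] A] B]; split; last first.
  by rewrite /sD /= -[X in _ == X](tpermL d1 d2) (inj_eq perm_inj).
rewrite /worker_view /sD /sW /sZ /sA /sB /=; congr (_, _, _).
apply/ffunP => t; rewrite !qry_eval ffunE -/(g t).
by move: (vanish_x_neq0 i) => ?; field.
Qed.

Lemma scheme_secure : (0 < T)%N -> is_secure n a b c alpha beta.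
Proof.
move=> T_gt0 i; apply: mutual_info_eq0_transitive => X1 X2.
pose t0 := Ordinal T_gt0.
pose shift (Z : Keys F a b T) : Keys F a b T :=
  [ffun t => Z t + ((t == t0)%:R / vanish.[x i]) *: (X2 - X1)].
exists (fun s => (sD s, sW s, shift (sZ s), sA s, sB s)).
split.
  move=> [[[[d z] Z] A] B] [[[[d' z'] Z'] A'] B'].
  rewrite /sD /sW /sZ /sA /sB /= => -[-> -> ZZ' -> ->].
  congr (_, _, _, _, _); apply/ffunP => t.
  by move/ffunP: ZZ' => /(_ t); rewrite !ffunE => /addIr.
move=> [[[[d z] Z] A] B]; split => //; rewrite /sD /sW /sZ /sA /=.
have -> : codedA alpha beta i d z (shift Z) A =
          codedA alpha beta i d z Z A + (X2 - X1).
  rewrite /codedA -addrA; congr (_ + _).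
  under eq_bigr do rewrite ffunE scalerDr scalerA mulrCA mulfV ?vanish_x_neq0 // mulr1.
  rewrite big_split /= -scaler_suml; congr (_ + _).
  rewrite (bigD1 t0) //=.
  by rewrite big1 ?addr0 ?scale1r // => t /negbTE ->.
by rewrite addrCA -[X in _ == X]addr0 (inj_eq (addrI X2)) subr_eq0.
Qed.

Lemma scheme_exists_private :
  T = 0%N -> exists_private_scheme F p m n M N a b c (2 * R)%N.
Proof.
move=> T0; exists Noise, T, Noise, qry, alpha, beta, gam, dec.
split; first by apply/card_gt0P; exists [ffun=> 0].
by split; [have := scheme_threshold; rewrite [X in (_ + X)%N]T0 addn0 | exact: scheme_private].
Qed.

Lemma scheme_exists_private_secure :
  T = 1%N -> exists_private_secure_scheme F p m n M N a b c (2 * R + 1)%N.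
Proof.
move=> T1; exists Noise, T, Noise, qry, alpha, beta, gam, dec.
split; first by apply/card_gt0P; exists [ffun=> 0].
split; first by have := scheme_threshold; rewrite [X in (_ + X)%N]T1.
by split; [exact: scheme_private | apply: scheme_secure; rewrite T1].
Qed.

End PolynomialScheme.

Lemma disjoint_injections (F : finType) (N R : nat) : (N + R <= #|F|)%N ->
  exists (x : 'I_N -> F) (node : 'I_R -> F),
    [/\ injective x, injective node & forall i h, x i != node h].
Proof.
move=> NR_le; pose pt (i : 'I_(N + R)) : F := enum_val (widen_ord NR_le i).
have pt_inj : injective pt.
  by move=> i j /enum_val_inj /(congr1 val) ij; apply: val_inj.
exists (pt \o @lshift N R), (pt \o @rshift N R); split.
- by move=> i j /pt_inj /lshift_inj.
- by move=> i j /pt_inj /rshift_inj.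
- by move=> i h; rewrite /= (inj_eq pt_inj) eq_lrshift.
Qed.

Local Close Scope ring_scope.

Theorem theorem2 :
  forall p m n M N : nat,
    (0 < p)%N -> (0 < m)%N -> (0 < n)%N -> (0 < M)%N ->
    exists q0 : nat,
      forall F : finFieldType, (q0 <= #|F|)%N ->
      forall a b c R : nat,
        is_bilinear_complexity F p m n R ->
        exists_private_scheme F p m n M N a b c (2 * R) /\
        exists_private_secure_scheme F p m n M N a b c (2 * R + 1).
Proof.
move=> p m n M N _ _ _ _.
exists (N + m * p * n)%N => F F_large a b c R R_bilinear.
have [[u [v [w uvw_decomp]]] _] := R_bilinear.
have NR_le : (N + R <= #|F|)%N.
  by apply: leq_trans F_large; rewrite leq_add2l (bilinear_complexity_le R_bilinear).
have [x [node [x_inj node_inj x_neq_node]]] := disjoint_injections NR_le.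
split.
  exact: (scheme_exists_private (T := 0) M a b c uvw_decomp x_inj node_inj x_neq_node erefl).
exact: (scheme_exists_private_secure (T := 1) M a b c uvw_decomp x_inj node_inj x_neq_node erefl).
Qed.
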